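(* Let $X$ be a path-connected topological space with base point $x_0\in X$, and let $i_1,i_2\colon X\to X\times X$ be the inclusions $i_1(x)=(x,x_0)$ and $i_2(x)=(x_0,x)$. Then $\mathrm{D}(i_1,i_2)=\mathrm{cat}(X)$.
   Context: For continuous maps $f,g\colon X\to Y$ between topological spaces, the homotopic distance $\mathrm{D}(f,g)$ is the least integer $n\geq 0$ such that there is an open cover $\{U_0,\dots,U_n\}$ of $X$ with $f|_{U_j}\simeq g|_{U_j}$ (homotopic as maps $U_j\to Y$) for all $j$; if no such cover exists, $\mathrm{D}(f,g)=\infty$. For a path-connected space $X$, the (normalized) Lusternik–Schnirelmann category $\mathrm{cat}(X)$ is the least integer $n\geq 0$ such that $X$ can be covered by $n+1$ open sets $U$ whose inclusion $U\hookrightarrow X$ is null-homotopic. *)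

From HB Require Import structures.
From mathcomp Require Import all_boot all_order all_algebra.
From mathcomp Require Import all_classical all_reals all_analysis.
From mathcomp Require Import Rstruct Rstruct_topology.
Set Implicit Arguments. Unset Strict Implicit. Unset Printing Implicit Defensive.
Import Order.TTheory GRing.Theory Num.Theory.
Local Open Scope classical_set_scope.
Local Open Scope ring_scope.

Notation RR := Rdefinitions.R.

Definition unitI : set RR := [set t : RR | 0 <= t <= 1].

(* f|_U and g|_U are homotopic as maps U -> Y: there is a map
   H : U x [0,1] -> Y, continuous for the subspace topology of U x [0,1]
   inside X x R, with H(-,0) = f and H(-,1) = g on U. *)
Definition homotopic_on {X Y : topologicalType} (U : set X) (f g : X -> Y) :=
  exists H : X * RR -> Y,
    {within U `*` unitI, continuous H} /\
    (forall x, U x -> H (x, 0) = f x /\ H (x, 1) = g x).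

Definition path_connected (X : topologicalType) :=
  forall x y : X, exists p : RR -> X,
    {within unitI, continuous p} /\ p 0 = x /\ p 1 = y.

Definition open_cover_by {X : topologicalType} (n : nat) (P : set X -> Prop) :=
  exists U : nat -> set X,
    (forall j, (j <= n)%N -> open (U j) /\ P (U j)) /\
    (forall x, exists2 j, (j <= n)%N & U j x).

Definition incl_nullhomotopic {X : topologicalType} (U : set X) :=
  exists c : X, homotopic_on U id (cst c).

(* Least n with property P, or None (= infinity) if there is none. *)
Definition least_or_inf (P : nat -> Prop) : option nat :=
  match pselect (exists n, `[< P n >]) with
  | left h => Some (ex_minn h)
  | right _ => None
  end.

Definition hdist {X Y : topologicalType} (f g : X -> Y) : option nat :=
  least_or_inf (fun n => open_cover_by n (fun U => homotopic_on U f g)).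

(* Normalized LS category cat(X); None encodes infinity. *)
Definition LScat (X : topologicalType) : option nat :=
  least_or_inf (fun n => open_cover_by n (fun U : set X => incl_nullhomotopic U)).

From HB Require Import structures.
From mathcomp Require Import all_boot all_order all_algebra.
From mathcomp Require Import all_classical all_reals all_analysis.
From mathcomp Require Import Rstruct Rstruct_topology.
From mathcomp Require Import lra.
Set Implicit Arguments. Unset Strict Implicit. Unset Printing Implicit Defensive.
Import Order.TTheory GRing.Theory Num.Theory.
Local Open Scope classical_set_scope.
Local Open Scope ring_scope.

(* Composing a homotopy between x |-> (x, x0) and x |-> (x0, x) on U with the
   first projection contracts U onto x0 in X.  Conversely, if the inclusion of
   U is homotopic to a constant, path connectedness moves that constant to x0,
   giving a homotopy F from the inclusion to x0; then (F, F run backwards) is a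
   homotopy from (x, x0) to (x0, x) on U.  So both kinds of open covers are the
   same, and so are the least sizes. *)

Lemma continuous_within_comp {S T U : topologicalType} (A : set S) (B : set T)
    (h : S -> T) (g : T -> U) :
  {within A, continuous h} -> set_fun A B h -> {within B, continuous g} ->
  {within A, continuous (g \o h)}.
Proof.
move=> ch hAB cg x.
have chB := subspaceT_continuous (f := mkfun_fun hAB) ch.
exact: (continuous_comp (chB x) (cg (h x))).
Qed.

Lemma withinUI_continuous {T U : topologicalType} (A B C : set T) (f : T -> U) :
  closed A -> closed B ->
  {within A `&` C, continuous f} -> {within B `&` C, continuous f} ->
  {within (A `|` B) `&` C, continuous f}.
Proof.
move=> cA cB ctsA ctsB; apply/continuous_closedP => W oW.
case/continuous_closedP/(_ _ oW)/closed_subspaceP: ctsA => V1 cV1 V1W.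
case/continuous_closedP/(_ _ oW)/closed_subspaceP: ctsB => V2 cV2 V2W.
apply/closed_subspaceP; exists ((V1 `&` A) `|` (V2 `&` B)).
  by apply: closedU; exact: closedI.
have memW (V D : set T) : V `&` D = f @^-1` W `&` D ->
    forall t, D t -> V t <-> W (f t).
  move=> VD t Dt; split=> [Vt|Wft].
  - by have [] : (f @^-1` W `&` D) t by rewrite -VD.
  - by have [] : (V `&` D) t by rewrite VD.
apply/seteqP; split=> t.
- case=> [[[V1t At]|[V2t Bt]] [ABt Ct]]; split=> //.
  + exact/(memW _ _ V1W t).
  + exact/(memW _ _ V2W t).
- case=> Wft [[At|Bt] Ct].
  + by split; [left; split=> //; exact/(memW _ _ V1W t) | split=> //; left].
  + by split; [right; split=> //; exact/(memW _ _ V2W t) | split=> //; right].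
Qed.

Lemma within_continuous_reparam {X Y : topologicalType} (A B : set (X * RR))
    (H : X * RR -> Y) (k : RR -> RR) :
  {within B, continuous H} -> continuous k ->
  set_fun A B (fun z => (z.1, k z.2)) ->
  {within A, continuous (fun z => H (z.1, k z.2))}.
Proof.
move=> cH ck AB.
have ch : {within A, continuous (fun z : X * RR => (z.1, k z.2))}.
  apply: continuous_subspaceT => z.
  exact: (cvg_pair cvg_fst (continuous_comp cvg_snd (ck z.2))).
exact: (continuous_within_comp ch AB cH).
Qed.

Section homotopic_on.
Context {X Y : topologicalType} (U : set X).

Lemma homotopic_on_comp {Z : topologicalType} (phi : Y -> Z) (f g : X -> Y) :
  continuous phi -> homotopic_on U f g -> homotopic_on U (phi \o f) (phi \o g).
Proof.
move=> cphi [H [cH Hfg]]; exists (phi \o H); split.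
- apply: (@continuous_within_comp _ _ _ _ setT H phi cH) => //.
  exact: continuous_subspaceT.
- by move=> x /Hfg[/= -> ->].
Qed.

Lemma homotopic_on_pair {Z : topologicalType}
    (f1 g1 : X -> Y) (f2 g2 : X -> Z) :
  homotopic_on U f1 g1 -> homotopic_on U f2 g2 ->
  homotopic_on U (fun x => (f1 x, f2 x)) (fun x => (g1 x, g2 x)).
Proof.
move=> [H1 [cH1 H1fg]] [H2 [cH2 H2fg]]; exists (fun z => (H1 z, H2 z)); split.
- by move=> z; apply: cvg_pair; [exact: cH1 | exact: cH2].
- by move=> x Ux; have [-> ->] := H1fg x Ux; have [-> ->] := H2fg x Ux.
Qed.

Lemma homotopic_on_sym (f g : X -> Y) :
  homotopic_on U f g -> homotopic_on U g f.
Proof.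
move=> [H [cH Hfg]]; exists (fun z => H (z.1, 1 - z.2)); split.
- apply: (within_continuous_reparam (k := fun t => 1 - t) cH).
    move=> t; apply: (@continuousB _ RR^o); first exact: cst_continuous.
    exact: cvg_id.
  move=> [x t] [/= Ux /andP[t0 t1]]; split=> //.
  by rewrite /unitI /=; apply/andP; split; lra.
- by move=> x /Hfg[Hf Hg]; rewrite /= subr0 subrr.
Qed.

Lemma homotopic_on_cst (p : RR -> Y) :
  {within unitI, continuous p} -> homotopic_on U (cst (p 0)) (cst (p 1)).
Proof.
move=> cp; exists (p \o snd); split=> //.
apply: (continuous_within_comp (B := unitI)) cp.
- by apply: continuous_subspaceT => z; exact: cvg_snd.
- by move=> z [].
Qed.

Lemma homotopic_on_trans (f g h : X -> Y) :
  homotopic_on U f g -> homotopic_on U g h -> homotopic_on U f h.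
Proof.
move=> [H [cH Hfg]] [G [cG Hgh]].
pose K z := if z.2 <= 2^-1 then H (z.1, 2 * z.2) else G (z.1, 2 * z.2 - 1).
have closed_snd (P : set RR) : closed P -> closed [set z : X * RR | P z.2].
  by apply: (continuous_closedP _).1 => z; exact: cvg_snd.
have halves : [set z : X * RR | z.2 <= 2^-1] `|` [set z | 2^-1 <= z.2] = setT.
  apply/seteqP; split=> // z _.
  by case: (lerP z.2 2^-1) => [|/ltW]; [left|right].
exists K; split.
- rewrite -[U `*` unitI]setTI -halves.
  apply: withinUI_continuous.
  + exact: (closed_snd _ (@closed_le _ 2^-1)).
  + exact: (closed_snd _ (@closed_ge _ 2^-1)).
  + pose H2 z := H (z.1, 2 * z.2).
    apply: (subspace_eq_continuous (f := from_subspace _ H2)).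
      by move=> z; rewrite inE => -[/= z_le _]; rewrite /from_subspace /K z_le.
    apply: (within_continuous_reparam (k := fun t => 2 * t) cH).
      exact: mulrl_continuous.
    move=> [x t] [/= t_le [/= Ux /andP[t0 _]]]; split=> //.
    by rewrite /unitI /=; apply/andP; split; lra.
  + pose G2 z := G (z.1, 2 * z.2 - 1).
    apply: (subspace_eq_continuous (f := from_subspace _ G2)).
      move=> [x t]; rewrite inE => -[/= t_ge [/= Ux _]].
      rewrite /from_subspace /G2 /K /=.
      case: ifP => // t_le.
      have -> : t = 2^-1 by apply/le_anti; rewrite t_le t_ge.
      rewrite mulfV ?pnatr_eq0 // subrr.
      by have [-> _] := Hgh x Ux; have [_ ->] := Hfg x Ux.
    apply: (within_continuous_reparam (k := fun t => 2 * t - 1) cG).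
      move=> t; apply: (@continuousB _ RR^o); last exact: cst_continuous.
      exact: mulrl_continuous.
    move=> [x t] [/= t_ge [/= Ux /andP[_ t1]]]; split=> //.
    by rewrite /unitI /=; apply/andP; split; lra.
- move=> x Ux; have [Hf _] := Hfg x Ux; have [_ Hh] := Hgh x Ux.
  have one_gt_half : (1 <= 2^-1 :> RR) = false.
    by apply/negbTE; rewrite -ltNge; lra.
  rewrite /K /= invr_ge0 ler0n mulr0 Hf one_gt_half.
  by rewrite mulr1 -[2]/(1 + 1) addrK.
Qed.

End homotopic_on.

Lemma homotopic_axis_inclusionsP {X : topologicalType} (x0 : X) (U : set X) :
  path_connected X ->
  homotopic_on U (fun x => (x, x0)) (fun x => (x0, x)) <-> incl_nullhomotopic U.
Proof.
move=> pcX; split=> [i12|[c Hc]].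
  exists x0; apply: (homotopic_on_comp (phi := fst)) i12 => z.
  exact: cvg_fst.
have [p [cp [p0 p1]]] := pcX c x0; subst c x0.
have Hx0 : homotopic_on U id (cst (p 1)).
  exact: homotopic_on_trans Hc (homotopic_on_cst U cp).
exact: homotopic_on_pair Hx0 (homotopic_on_sym Hx0).
Qed.

Theorem proposition2p6 (X : topologicalType) (x0 : X) :
  path_connected X ->
  hdist (fun x : X => (x, x0)) (fun x : X => (x0, x)) = LScat X.
Proof.
move=> pcX; rewrite /hdist /LScat; congr least_or_inf.
apply: funext => n; congr open_cover_by; apply: funext => U.
exact/propext/homotopic_axis_inclusionsP.
Qed.
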